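(* Let $n\ge2$. Then \begin{align*} \zeta_{O_{2n}}(u)^{-1}=&(1-u^2)^{2n^2-4n}\bigl((2n-3)^2u^4+(4n-6)u^3+(4n-6)u^2+2u+1\bigr)^{n-1}\\ &\cdot\bigl((2n-3)u^2+1\bigr)\bigl((2n-3)u^2+(2-2n)u+1\bigr). \end{align*}
   Context: For $n\ge2$, the cocktail party graph $O_{2n}$ is the simple graph on $2n$ vertices that is the complement of a perfect matching (equivalently the complete multipartite graph $K_{2,2,\dots,2}$ with $n$ parts of size $2$). For a finite connected graph $G$ with vertex set $V$, edge set $E$ and no vertex of degree $1$, let $r=|E|-|V|+1$, $\mathcal{A}$ the adjacency matrix, $\mathcal{Q}=D-I$ with $D$ the diagonal degree matrix; the reciprocal Ihara zeta function is $\zeta_G(u)^{-1}=(1-u^2)^{r-1}\det(I-\mathcal{A}u+\mathcal{Q}u^2)$. *)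

From HB Require Import structures.
From mathcomp Require Import all_boot all_order all_algebra.
Set Implicit Arguments. Unset Strict Implicit. Unset Printing Implicit Defensive.
Import Order.TTheory GRing.Theory Num.Theory.
Local Open Scope ring_scope.

(* A finite simple graph on the vertex set 'I_m is a symmetric irreflexive
   relation e : rel 'I_m. *)

Definition nedges (m : nat) (e : rel 'I_m) : nat :=
  #|[set p : 'I_m * 'I_m | e p.1 p.2 && (p.1 < p.2)%N]|.

Definition vdeg (m : nat) (e : rel 'I_m) (i : 'I_m) : nat := #|[set j | e i j]|.

Definition adjmx (m : nat) (e : rel 'I_m) : 'M[{poly int}]_m :=
  \matrix_(i, j) (e i j)%:R.

Definition Qmx (m : nat) (e : rel 'I_m) : 'M[{poly int}]_m :=
  \matrix_(i, j) ((i == j)%:R * ((vdeg e i)%:R - 1)).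

(* reciprocal Ihara zeta function, as a polynomial in u = 'X:
   (1 - u^2)^(r-1) det(I - A u + Q u^2), with r - 1 = |E| - |V|
   (nonnegative for connected graphs with no vertex of degree <= 1). *)
Definition ihara_recip (m : nat) (e : rel 'I_m) : {poly int} :=
  (1 - 'X ^+ 2) ^+ (nedges e - m)
  * \det (1%:M - 'X *: adjmx e + ('X ^+ 2) *: Qmx e).

(* cocktail party graph O_{2n} on vertices 0..2n-1: complement of the perfect
   matching {2k, 2k+1}. *)
Definition cocktail (n : nat) : rel 'I_(2 * n) :=
  fun i j => (i != j) && ((i : nat)./2 != (j : nat)./2).

(* For O_{2n} every vertex has degree 2n - 2, so by the
   handshake lemma |E| - |V| = n(2n - 2) - 2n = 2n^2 - 4n, and
   I - A u + Q u^2 = a I + b P - u J with a = 1 + u + (2n - 3) u^2, b = u,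
   P the permutation matrix swapping the two ends of each matching edge and
   J the all-ones matrix.  Subtracting the rows of the second pair from those
   of the first, and adding back the corresponding columns, splits off the
   block [[a, b], [b, a]] of determinant a^2 - b^2 and leaves a matrix of the
   same shape on the remaining pairs, so by induction
   det (a I + b P + 1 w^T) = (a + b)^(n-1) (a - b)^n (a + b + sum w).
   Finally (a + b)(a - b) is the quartic factor of the theorem. *)

From mathcomp Require Import all_boot all_order all_algebra.
From mathcomp Require Import ring zify.
Set Implicit Arguments. Unset Strict Implicit. Unset Printing Implicit Defensive.
Import GRing.Theory.
Local Open Scope ring_scope.

Lemma card_set_nat (T : finType) (P : pred T) : #|[set x | P x]| = (\sum_x P x)%N.
Proof. by rewrite -sum1dep_card big_mkcond; apply: eq_bigr => x _; case: (P x). Qed.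

Lemma nedges_handshake m (e : rel 'I_m) :
  symmetric e -> irreflexive e -> (nedges e).*2 = (\sum_i vdeg e i)%N.
Proof.
move=> e_sym e_irr.
have split_lt i j : e i j = (e i j && (i < j)%N) || (e j i && (j < i)%N).
  by case: (ltngtP i j) => [_|_|/val_inj ->]; rewrite ?andbT ?andbF ?orbF.
rewrite /nedges (card_set_nat (fun p : ('I_m * 'I_m)%type => e p.1 p.2 && (p.1 < p.2)%N)).
rewrite -(pair_bigA _ (fun i j : 'I_m => nat_of_bool (e i j && (i < j)%N))) /=.
rewrite -addnn {2}exchange_big /= -big_split /=; apply: eq_bigr => i _.
rewrite /vdeg (card_set_nat (e i)) -big_split /=; apply: eq_bigr => j _.
by rewrite [in RHS]split_lt; case: ltngtP; rewrite ?andbT ?andbF ?orbF ?addn0.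
Qed.

Lemma cocktailE n (i j : 'I_(2 * n)) : cocktail i j = ((i : nat)./2 != (j : nat)./2).
Proof. by rewrite /cocktail; case: (eqVneq i j) => [->|]; rewrite ?eqxx. Qed.

Lemma cocktail_sym n : symmetric (@cocktail n).
Proof. by move=> i j; rewrite !cocktailE eq_sym. Qed.

Lemma cocktail_irr n : irreflexive (@cocktail n).
Proof. by move=> i; rewrite cocktailE eqxx. Qed.

Lemma card_same_half n (i : 'I_(2 * n)) :
  #|[set j : 'I_(2 * n) | (j : nat)./2 == (i : nat)./2]| = 2.
Proof.
have lt_even : ((i : nat)./2.*2 < 2 * n)%N by move: (ltn_ord i); rewrite -!divn2; lia.
have lt_odd : ((i : nat)./2.*2.+1 < 2 * n)%N by move: (ltn_ord i); rewrite -!divn2; lia.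
have -> : [set j : 'I_(2 * n) | (j : nat)./2 == (i : nat)./2]
          = [set Ordinal lt_even; Ordinal lt_odd].
  by apply/setP => j; rewrite !inE -!val_eqE /= -!divn2; lia.
by rewrite cards2 -val_eqE /= ltn_eqF.
Qed.

Lemma vdeg_cocktail n (i : 'I_(2 * n)) : vdeg (@cocktail n) i = (2 * n - 2)%N.
Proof.
rewrite /vdeg.
have -> : [set j | @cocktail n i j]
          = ~: [set j : 'I_(2 * n) | (j : nat)./2 == (i : nat)./2].
  by apply/setP => j; rewrite !inE cocktailE eq_sym.
by rewrite cardsCs setCK card_same_half card_ord.
Qed.

Lemma nedges_cocktail n : nedges (@cocktail n) = (n * (2 * n - 2))%N.
Proof.
apply: double_inj; rewrite (nedges_handshake (@cocktail_sym n) (@cocktail_irr n)).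
by rewrite (eq_bigr _ (fun i _ => vdeg_cocktail i)) sum_nat_const card_ord -mul2n mulnA.
Qed.

Section PairMatrix.
Variable R : comNzRingType.

Lemma det_mx2 (A : 'M[R]_2) : \det A = A 0 0 * A 1 1 - A 0 1 * A 1 0.
Proof.
rewrite (expand_det_row _ 0) !big_ord_recr big_ord0 /= /cofactor !det_mx11 !mxE /=.
rewrite add0r expr0 expr1 !mul1r mulN1r mulrN.
by congr (_ * _ - _ * _); congr (A _ _); apply/val_inj.
Qed.

Lemma sum_ord_natr_eq m k (F : nat -> R) :
  \sum_(l < m) ((l : nat) == k)%:R * F l = if (k < m)%N then F k else 0.
Proof.
elim: m => [|m IH]; first by rewrite big_ord0.
rewrite big_ord_recr /= IH.
case: (ltngtP k m) => [lt_km|lt_mk|->]; rewrite ?eqxx ?mul1r ?mul0r ?addr0 ?add0r.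
- by rewrite ltnS ltnW.
- by rewrite ltnS leqNgt lt_mk.
- by rewrite ltnSn.
Qed.

(* [1 - peel_mx K] subtracts rows 2, 3 from rows 0, 1, and [1 + peel_mx K]
   adds columns 0, 1 to columns 2, 3. *)
Definition peel_mx K : 'M[R]_(2 + K) :=
  \matrix_(i, j) (((i : nat) < 2)%N && ((j : nat) == i + 2)%N)%:R.

Lemma det_peel K c : \det (1%:M + c *: peel_mx K) = 1.
Proof.
rewrite -det_tr det_trig; last first.
  apply/is_trig_mxP => i j lt_ij; rewrite !mxE -val_eqE /= (gtn_eqF lt_ij).
  have /negbTE -> : (i : nat) != (j + 2)%N by lia.
  by rewrite andbF mulr0 addr0.
rewrite big1 // => i _; rewrite !mxE eqxx.
have /negbTE -> : (i : nat) != (i + 2)%N by lia.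
by rewrite andbF mulr0 addr0.
Qed.

Lemma peel_rows K (g : nat -> nat -> R) : (2 <= K)%N ->
  (1%:M - peel_mx K) *m (\matrix_(i, j) g i j : 'M_(2 + K)) =
  \matrix_(i, j) (g i j - ((i : nat) < 2)%N%:R * g (i + 2)%N j).
Proof.
move=> le2K; apply/matrixP => i j; rewrite mulmxBl mul1mx !mxE.
under eq_bigr do rewrite !mxE -mulnb natrM -mulrA.
rewrite -mulr_sumr (sum_ord_natr_eq _ _ (g^~ j)).
by case: ltnP => lti2; rewrite ?mul0r // ifT //; lia.
Qed.

Lemma peel_cols K (g : nat -> nat -> R) :
  (\matrix_(i, j) g i j : 'M_(2 + K)) *m (1%:M + peel_mx K) =
  \matrix_(i, j) (g i j + ((2 <= (j : nat)) && ((j : nat) < 4))%N%:R * g i (j - 2)%N).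
Proof.
apply/matrixP => i j; rewrite mulmxDr mulmx1 !mxE.
have peelE (l : 'I_(2 + K)) :
    (((l < 2) && (j == l + 2 :> nat)) = ((2 <= j) && (j < 4)) && (l == j - 2 :> nat))%N.
  by apply/idP/idP; lia.
under eq_bigr do rewrite !mxE peelE -mulnb natrM mulrC -mulrA.
rewrite -mulr_sumr (sum_ord_natr_eq _ _ (g i)).
by rewrite ifT //; move: (ltn_ord j); lia.
Qed.

(* Entries of [a I + b P + 1 w^T], where P is the permutation matrix of the
   involution 2k <-> 2k+1. *)
Definition pair_entry (a b : R) (w : nat -> R) (i j : nat) : R :=
  (i == j)%:R * a + ((i != j) && (i./2 == j./2))%:R * b + w j.

Lemma det_pair_mx_step m a b w :
  \det (\matrix_(i < m.+2.*2, j < m.+2.*2) pair_entry a b w i j) =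
  (a ^+ 2 - b ^+ 2) * \det (\matrix_(i < m.+1.*2, j < m.+1.*2)
                            pair_entry a b (fun j => w j.+2 + (j < 2)%N%:R * w j) i j).
Proof.
pose K := m.+1.*2.
pose h i j := pair_entry a b w i j - (i < 2)%N%:R * pair_entry a b w (i + 2) j.
pose f i j := h i j + ((2 <= j) && (j < 4))%N%:R * h i (j - 2)%N.
have f_ur i j : (i < 2)%N -> (2 <= j)%N -> f i j = 0.
  case: i => [|[|//]] _; case: j => [|[|[|[|j]]]] // _;
    rewrite /f /h /pair_entry /= ?subn2 /=; ring.
have f_ul i j : (i < 2)%N -> (j < 2)%N -> f i j = (i == j)%:R * a + (i != j)%:R * b.
  by case: i => [|[|//]] _; case: j => [|[|//]] _; rewrite /f /h /pair_entry /=; ring.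
have f_dr i j : f i.+2 j.+2 = pair_entry a b (fun j => w j.+2 + (j < 2)%N%:R * w j) i j.
  by case: j => [|[|j]]; rewrite /f /h /pair_entry /= ?subn2 /= !eqSS; ring.
set M := (\matrix_(i < 2 + K, j < 2 + K) pair_entry a b w i j).
have -> : \det M = \det ((1%:M - peel_mx K) *m M *m (1%:M + peel_mx K)).
  rewrite !det_mulmx -scaleN1r -[peel_mx K in X in _ * X]scale1r !det_peel.
  by rewrite mul1r mulr1.
have -> : (1%:M - peel_mx K) *m M *m (1%:M + peel_mx K) = \matrix_(i, j) f i j.
  by rewrite peel_rows; [exact: peel_cols | rewrite /K; lia].
rewrite -[X in \det X]submxK.
have -> : ursubmx (\matrix_(i, j) f i j : 'M_(2 + K)) = 0.
  by apply/matrixP => i j; rewrite !mxE /= f_ur.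
rewrite det_lblock det_mx2 !mxE /= !f_ul // modn_small //; congr (_ * _).
  by rewrite /=; ring.
by congr (\det _); apply/matrixP => i j; rewrite !mxE /= !add2n f_dr.
Qed.

Lemma det_pair_mx m a b w :
  \det (\matrix_(i < m.+1.*2, j < m.+1.*2) pair_entry a b w i j) =
  (a + b) ^+ m * (a - b) ^+ m.+1 * (a + b + \sum_(i < m.+1.*2) w i).
Proof.
elim: m w => [|m IH] w.
  by rewrite det_mx2 !mxE /= !big_ord_recr big_ord0 /= /pair_entry /=; ring.
rewrite det_pair_mx_step IH big_split /=.
have -> : \sum_(i < m.+1.*2) (i < 2)%N%:R * w i = w 0%N + w 1%N.
  rewrite !big_ord_recl big1 => [|i _]; last by rewrite mul0r.
  by rewrite /= !mul1r addr0.
rewrite [in RHS](big_ord_recl (m.+1.*2).+1) big_ord_recl /= !exprS; ring.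
Qed.

Lemma det_pair_mxE s m a b w (M : 'M[R]_s) : s = m.+1.*2 ->
  (forall i j : 'I_s, M i j = pair_entry a b w i j) ->
  \det M = (a + b) ^+ m * (a - b) ^+ m.+1 * (a + b + \sum_(i < s) w i).
Proof.
move=> def_s M_E; subst s; rewrite -det_pair_mx.
by congr (\det _); apply/matrixP => i j; rewrite mxE M_E.
Qed.

End PairMatrix.

Lemma ihara_mx_cocktailE n (i j : 'I_(2 * n)) :
  (1%:M - 'X *: adjmx (@cocktail n) + 'X ^+ 2 *: Qmx (@cocktail n)) i j =
  pair_entry (1 + 'X + ((2 * n - 2)%N%:R - 1) * 'X ^+ 2) 'X (fun=> - 'X) i j.
Proof.
rewrite !mxE vdeg_cocktail cocktailE /pair_entry val_eqE.
case: (eqVneq i j) => [->|/negbTE ne_ij]; rewrite ?eqxx ?ne_ij /=; first ring.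
by case: eqP => _ /=; ring.
Qed.

Lemma polyC_intr (z : int) : z%:P = z%:~R :> {poly int}.
Proof. by rewrite -{1}[z]intz rmorph_int. Qed.

Theorem mainTheorem12 (n : nat) (hn : (2 <= n)%N) :
  @ihara_recip (2 * n)%N (@cocktail n) =
  (1 - 'X ^+ 2) ^+ (2 * n ^ 2 - 4 * n)
  * ((((2 * n%:Z - 3) ^+ 2)%:P * 'X ^+ 4 + (4 * n%:Z - 6)%:P * 'X ^+ 3
      + (4 * n%:Z - 6)%:P * 'X ^+ 2 + 2%:P * 'X + 1) ^+ (n - 1))
  * ((2 * n%:Z - 3)%:P * 'X ^+ 2 + 1)
  * ((2 * n%:Z - 3)%:P * 'X ^+ 2 + (2 - 2 * n%:Z)%:P * 'X + 1).
Proof.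
case: n hn => [|m] // _.
rewrite /ihara_recip nedges_cocktail.
rewrite (det_pair_mxE (m := m) _ (ihara_mx_cocktailE (n := m.+1))); last by rewrite mul2n.
rewrite sumr_const card_ord !polyC_intr.
have -> : (m.+1 * (2 * m.+1 - 2) - 2 * m.+1 = 2 * m.+1 ^ 2 - 4 * m.+1)%N.
  rewrite !expnS expn0 muln1; lia.
have -> : (2 * m.+1 - 2 = 2 * m)%N by lia.
set a := 1 + 'X + _ * 'X ^+ 2.
have -> : ((2 * m.+1%:Z - 3) ^+ 2)%:~R * 'X ^+ 4 + (4 * m.+1%:Z - 6)%:~R * 'X ^+ 3
          + (4 * m.+1%:Z - 6)%:~R * 'X ^+ 2 + 2%:~R * 'X + 1 = (a + 'X) * (a - 'X).
  by rewrite /a; ring.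
rewrite subn1 /= exprMn [(_ - 'X) ^+ m.+1]exprS /a; ring.
Qed.
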